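(* Let $A$ be a $\Bbbk$-algebra which is a domain. For $k=1,\dots,m$ let $\varphi_k$ be algebra automorphisms of $A$ and $\partial_k$ locally nilpotent skew derivations of $A$ with respect to $\varphi_k$, and suppose $\partial_\ell\circ\varphi_k=q_{k\ell}\,\varphi_k\circ\partial_\ell$ for all $1\le k\le\ell\le m$, where $q_{k\ell}\in\Bbbk^\times$ and each $q_{kk}$ is not a root of unity. Then the string map $\nu=\nu_{(\partial_1,\dots,\partial_m)}:A\setminus\{0\}\to\mathbb Z_{\ge0}^m$ is a valuation (with respect to the lexicographic order) satisfying $\nu(ab)=\nu(a)+\nu(b)$ for all nonzero $a,b\in A$.
   Context: A skew derivation with respect to $\varphi$ is a linear map $\partial$ with $\partial(ab)=\partial(a)b+\varphi(a)\partial(b)$. For a locally nilpotent linear map $E$ and $x\ne0$, $\nu_E(x)$ is the largest $n\ge0$ with $E^n(x)\ne0$, and $\lambda_E(x)=E^{\nu_E(x)}(x)$ (up to a nonzero scalar). The string map is defined by $\nu_{(\partial_1,\dots,\partial_m)}(x)=(a_1,\dots,a_m)$ where $x_0=x$, $a_k=\nu_{\partial_k}(x_{k-1})$ and $x_k=\partial_k^{a_k}(x_{k-1})$. The lexicographic order on $\mathbb Z_{\ge0}^m$ compares the first coordinate first. A valuation into an ordered set $C$ means $\nu(cx)=\nu(x)$ for $c\in\Bbbk^\times$ and $\nu(x+y)\le\max(\nu(x),\nu(y))$ when $x+y\ne0$. *)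

From HB Require Import structures.
From mathcomp Require Import all_boot all_order all_algebra.
From Stdlib Require Import ClassicalEpsilon.
Set Implicit Arguments. Unset Strict Implicit. Unset Printing Implicit Defensive.
Import Order.TTheory GRing.Theory Num.Theory.
Local Open Scope ring_scope.

Section Defs.
Variables (K : fieldType) (A : algType K).

Definition klinear (f : A -> A) : Prop :=
  forall (c : K) (x y : A), f (c *: x + y) = c *: f x + f y.

Definition is_domain : Prop :=
  forall a b : A, a * b = 0 -> a = 0 \/ b = 0.

Definition alg_auto (f : A -> A) : Prop :=
  [/\ klinear f, f 1 = 1, (forall a b, f (a * b) = f a * f b) & bijective f].

Definition skew_derivation (phi d : A -> A) : Prop :=
  klinear d /\ forall a b, d (a * b) = d a * b + phi a * d b.

Definition locally_nilpotent (E : A -> A) : Prop :=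
  forall x, exists n, iter n E x = 0.

Definition nuE (E : A -> A) (x : A) : nat :=
  epsilon (inhabits 0%N)
    (fun n => iter n E x <> 0 /\ forall k, (n < k)%N -> iter k E x = 0).

Fixpoint string_map (ds : seq (A -> A)) (x : A) : seq nat :=
  match ds with
  | [::] => [::]
  | d :: ds' => nuE d x :: string_map ds' (iter (nuE d x) d x)
  end.

End Defs.

Fixpoint lexle (s t : seq nat) : bool :=
  match s, t with
  | [::], _ => true
  | _ :: _, [::] => false
  | x :: s', y :: t' => (x < y)%N || ((x == y) && lexle s' t')
  end.

Definition seq_addn (s t : seq nat) : seq nat := [seq (p.1 + p.2)%N | p <- zip s t].

(* For a single locally nilpotent skew derivation D with D∘φ = q φ∘D, the
   q-Leibniz rule shows that the top nonvanishing iterate of D on a product is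
   D^(s+t)(ab) = [s+t choose s]_q φ^t(D^s a) D^t b, where s = ν_D(a), t = ν_D(b).
   The q-binomial is nonzero because q is not a root of unity and A is a domain,
   so ν_D(ab) = ν_D(a) + ν_D(b).  Continuing with the next derivation, the new
   string element is a twisted product Ψ(a')b' with Ψ a composite of the φ_k,
   which the later derivations still q-commute with thanks to the hypothesis for
   k ≤ l; so the statement is proved for all such twisted products by induction
   on the list of derivations. *)
From HB Require Import structures.
From mathcomp Require Import all_boot all_order all_algebra.
From mathcomp Require Import zify ring.
From Stdlib Require Import ClassicalEpsilon.
Import GRing.Theory.
Local Open Scope ring_scope.
Set Implicit Arguments. Unset Strict Implicit.

Section Linear.
Variables (K : fieldType) (A : algType K).

Section KLinear.
Variable f : A -> A.
Hypothesis f_lin : klinear f.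

Lemma klinear0 : f 0 = 0.
Proof.
have := f_lin 1 0 0; rewrite !scale1r addr0 => f00.
by apply: (addrI (f 0)); rewrite addr0 -f00.
Qed.

Lemma klinearD x y : f (x + y) = f x + f y.
Proof. by have := f_lin 1 x y; rewrite !scale1r. Qed.

Lemma klinearZ c x : f (c *: x) = c *: f x.
Proof. by have := f_lin c x 0; rewrite !addr0 klinear0 addr0. Qed.

End KLinear.

Lemma klinear_iter (f : A -> A) n : klinear f -> klinear (iter n f).
Proof. by move=> f_lin; elim: n => [|n IH] c x y //=; rewrite IH f_lin. Qed.

Lemma klinear_comp (f g : A -> A) : klinear f -> klinear g -> klinear (f \o g).
Proof. by move=> f_lin g_lin c x y /=; rewrite g_lin f_lin. Qed.

Lemma iter_inj (f : A -> A) n : injective f -> injective (iter n f).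
Proof. by move=> f_inj; elim: n => [|n IH] x y //= /f_inj /IH. Qed.

Lemma klinear_inj_eq0 (f : A -> A) x :
  klinear f -> injective f -> (f x == 0) = (x == 0).
Proof. by move=> f_lin f_inj; rewrite -[X in f x == X](klinear0 f_lin) inj_eq. Qed.

Lemma domain_mul_neq0 (a b : A) : is_domain A -> a != 0 -> b != 0 -> a * b != 0.
Proof. by move=> A_dom a0 b0; apply/eqP => /A_dom [/eqP|/eqP]; apply/negP. Qed.

Lemma iter_eq0_ge (E : A -> A) x k k' :
  klinear E -> iter k E x = 0 -> (k <= k')%N -> iter k' E x = 0.
Proof.
move=> E_lin Ex0 le_kk'.
by rewrite -(subnK le_kk') iterD Ex0 klinear0 //; apply: klinear_iter.
Qed.

Definition q_commute (D g : A -> A) : Prop :=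
  exists2 c : K, c != 0 & forall x, D (g x) = c *: g (D x).

Lemma iter_q_commute (D g : A -> A) (c : K) k x :
  klinear D -> klinear g -> (forall y, D (g y) = c *: g (D y)) ->
  iter k D (g x) = c ^+ k *: g (iter k D x).
Proof.
move=> D_lin g_lin Dg; elim: k => [|k IH] /=; first by rewrite scale1r.
by rewrite IH klinearZ // Dg scalerA exprSr.
Qed.

Lemma q_commute_id D : q_commute D id.
Proof. by exists 1 => [|x]; rewrite ?oner_neq0 ?scale1r. Qed.

Lemma q_commute_comp D f g :
  klinear f -> q_commute D f -> q_commute D g -> q_commute D (f \o g).
Proof.
move=> f_lin [a a0 Df] [b b0 Dg]; exists (a * b) => [|x /=].
  by rewrite mulf_neq0.
by rewrite Df Dg klinearZ // scalerA mulrC.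
Qed.

Lemma q_commute_iter D f t : klinear f -> q_commute D f -> q_commute D (iter t f).
Proof.
move=> f_lin Df; elim: t => [|t IH]; first exact: q_commute_id.
exact: (q_commute_comp f_lin Df IH).
Qed.

End Linear.

Lemma lexle_refl s : lexle s s.
Proof. by elim: s => [|x s IH] //=; rewrite eqxx IH orbT. Qed.

Lemma seq_addn_cons (s t : nat) (u v : seq nat) :
  seq_addn (s :: u) (t :: v) = (s + t)%N :: seq_addn u v.
Proof. by []. Qed.

Section TopIterate.
Variables (K : fieldType) (A : algType K) (E : A -> A).
Hypotheses (E_lin : klinear E) (E_nil : locally_nilpotent E).

Lemma nuE_eq x n : iter n E x != 0 -> iter n.+1 E x = 0 -> nuE E x = n.
Proof.
move=> Enx En1x.
have top k : (n < k)%N -> iter k E x = 0 by move=> lt_nk; apply: iter_eq0_ge En1x _.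
rewrite /nuE; set P := (fun n => _ /\ _).
have : P (epsilon (inhabits 0%N) P).
  by apply: epsilon_spec; exists n; split => //; apply/eqP.
case; set N := epsilon _ _ => ENx topN.
case: (ltngtP N n) => // [lt_Nn|lt_nN]; first by move: Enx; rewrite topN ?eqxx.
by case: ENx; apply: top.
Qed.

(* [nuE E 0] is an unspecified epsilon value, hence the [x != 0] hypotheses. *)
Lemma nuE_spec x : x != 0 -> iter (nuE E x) E x != 0 /\ iter (nuE E x).+1 E x = 0.
Proof.
move=> x0; have : exists n, iter n E x == 0.
  by have [n Enx] := E_nil x; exists n; apply/eqP.
case/ex_minnP => -[|n] /eqP Enx min_n; first by rewrite -[x]/(iter 0 E x) Enx eqxx in x0.
have Enx0 : iter n E x != 0 by apply/eqP => /eqP /min_n; rewrite ltnn.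
by rewrite (nuE_eq Enx0 Enx).
Qed.

Lemma iter_nuE_neq0 x : x != 0 -> iter (nuE E x) E x != 0.
Proof. by case/nuE_spec. Qed.

Lemma iter_nuE_gt x k : x != 0 -> (nuE E x < k)%N -> iter k E x = 0.
Proof. by case/nuE_spec => _; apply: iter_eq0_ge. Qed.

Lemma nuE_lt x k : x != 0 -> iter k E x = 0 -> (nuE E x < k)%N.
Proof.
move=> x0 Ekx; rewrite ltnNge; apply/negP => le_k.
by move: (iter_nuE_neq0 x0); rewrite (iter_eq0_ge E_lin Ekx le_k) eqxx.
Qed.

Lemma nuE_scale c x : c != 0 -> x != 0 -> nuE E (c *: x) = nuE E x.
Proof.
have iterZ k : iter k E (c *: x) = c *: iter k E x.
  by apply: klinearZ; apply: klinear_iter.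
move=> c0 /nuE_spec [Enx En1x]; apply: nuE_eq; rewrite !iterZ ?En1x ?scaler0 //.
by rewrite scaler_eq0 negb_or c0.
Qed.

Let iterD k x y : iter k E (x + y) = iter k E x + iter k E y.
Proof. by apply: klinearD; apply: klinear_iter. Qed.

Lemma nuE_add_lt x y : x != 0 -> y != 0 -> (nuE E x < nuE E y)%N ->
  nuE E (x + y) = nuE E y /\ iter (nuE E y) E (x + y) = iter (nuE E y) E y.
Proof.
move=> x0 y0 lt_xy.
have Exy : iter (nuE E y) E (x + y) = iter (nuE E y) E y.
  by rewrite iterD iter_nuE_gt ?add0r.
split=> //; have [Eny En1y] := nuE_spec y0.
by apply: nuE_eq; rewrite ?Exy // iterD En1y iter_nuE_gt ?addr0 // ltnW.
Qed.

Lemma nuE_add_eq x y : x != 0 -> y != 0 -> nuE E x = nuE E y ->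
  iter (nuE E x) E (x + y) != 0 -> nuE E (x + y) = nuE E x.
Proof.
move=> x0 y0 eq_xy Exy; apply: nuE_eq => //.
by rewrite iterD (nuE_spec x0).2 eq_xy (nuE_spec y0).2 addr0.
Qed.

End TopIterate.

Section QFactorial.
Variables (K : fieldType) (q : K).

(* [qfact q n] is the q-factorial [n]_q! up to the factor (1 - q)^n. *)
Definition qfact (n : nat) : K := \prod_(i < n) (1 - q ^+ i.+1).

Lemma qfact0 : qfact 0 = 1.
Proof. by rewrite /qfact big_ord0. Qed.

Lemma qfactS n : qfact n.+1 = qfact n * (1 - q ^+ n.+1).
Proof. by rewrite /qfact big_ord_recr. Qed.

Lemma qfact_neq0 n : (forall k, (0 < k)%N -> q ^+ k != 1) -> qfact n != 0.
Proof.
move=> q_nonroot; elim: n => [|n IH]; first by rewrite qfact0 oner_eq0.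
by rewrite qfactS mulf_neq0 // subr_eq0 eq_sym q_nonroot.
Qed.

End QFactorial.

Section QLeibniz.
Variables (K : fieldType) (A : algType K) (D phi : A -> A) (q : K).
Hypotheses (D_lin : klinear D) (phi_lin : klinear phi)
  (D_mul : forall a b, D (a * b) = D a * b + phi a * D b)
  (D_phi : forall x, D (phi x) = q *: phi (D x)).

Let iter_lin k : klinear (iter k D) := klinear_iter k D_lin.

Let iter_mulS k a b :
  iter k.+1 D (a * b) = iter k D (D a * b) + iter k D (phi a * D b).
Proof. by rewrite iterSr D_mul klinearD. Qed.

Let iter_phi k x : iter k D (phi x) = q ^+ k *: phi (iter k D x).
Proof. exact: iter_q_commute. Qed.

Lemma iter_mul_vanish n s t a b : (s + t = n)%N ->
  iter s.+1 D a = 0 -> iter t.+1 D b = 0 -> iter n.+1 D (a * b) = 0.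
Proof.
elim: n s t a b => [|n IH] s t a b st_n Da Db.
  have [s0 t0] : s = 0%N /\ t = 0%N by lia.
  by move: Da Db; rewrite s0 t0 /= D_mul => -> ->; rewrite mul0r mulr0 addr0.
have left_term : iter n.+1 D (D a * b) = 0.
  case: s st_n Da => [|s] st_n Da; first by rewrite [D a]Da mul0r klinear0.
  by apply: (IH s t); rewrite -?iterSr //; lia.
have right_term : iter n.+1 D (phi a * D b) = 0.
  case: t st_n Db {left_term} => [|t] st_n Db; first by rewrite [D b]Db mulr0 klinear0.
  apply: (IH s t); rewrite -?iterSr //; first by lia.
  by rewrite iter_phi Da klinear0 // scaler0.
by rewrite iter_mulS left_term right_term addr0.
Qed.

Lemma iter_mul_top n s t a b : (s + t = n)%N ->
  iter s.+1 D a = 0 -> iter t.+1 D b = 0 ->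
  (qfact q s * qfact q t) *: iter n D (a * b)
    = qfact q n *: (iter t phi (iter s D a) * iter t D b).
Proof.
elim: n s t a b => [|n IH] s t a b st_n Da Db.
  have [s0 t0] : s = 0%N /\ t = 0%N by lia.
  by rewrite s0 t0 qfact0 mulr1.
(* Splitting D^(n+1)(ab) by the Leibniz rule, the two summands contribute
   (1 - q^s) and q^s (1 - q^t), which add up to 1 - q^(n+1). *)
have left_term : (qfact q s * qfact q t) *: iter n D (D a * b)
    = (1 - q ^+ s) *: (qfact q n *: (iter t phi (iter s D a) * iter t D b)).
  case: s st_n Da => [|s] st_n Da.
    by rewrite [D a]Da mul0r klinear0 // scaler0 expr0 subrr scale0r.
  rewrite [iter s.+1 D a]iterSr -(IH s t) -?iterSr //; last by lia.
  by rewrite !scalerA qfactS; congr (_ *: _); ring.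
have right_term : (qfact q s * qfact q t) *: iter n D (phi a * D b)
    = ((1 - q ^+ t) * q ^+ s)
      *: (qfact q n *: (iter t phi (iter s D a) * iter t D b)).
  case: t st_n Db {left_term} => [|t] st_n Db.
    by rewrite [D b]Db mulr0 klinear0 // scaler0 expr0 subrr mul0r scale0r.
  have phiDa : iter s.+1 D (phi a) = 0 by rewrite iter_phi Da klinear0 // scaler0.
  have -> : qfact q s * qfact q t.+1 = (1 - q ^+ t.+1) * (qfact q s * qfact q t).
    by rewrite qfactS; ring.
  rewrite -[LHS]scalerA (IH s t) -?iterSr //; last by lia.
  rewrite iter_phi (klinearZ (klinear_iter t phi_lin)) -iterSr -scalerAl.
  by rewrite !scalerA; congr (_ *: _); ring.
rewrite iter_mulS scalerDr left_term right_term !scalerA -scalerDl qfactS.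
have -> : q ^+ n.+1 = q ^+ s * q ^+ t by rewrite -exprD; congr (_ ^+ _); lia.
by congr (_ *: _); ring.
Qed.

End QLeibniz.

Section StringMap.
Variables (K : fieldType) (A : algType K) (I : eqType).
Variables (d phi : I -> A -> A) (q : I -> K) (r : rel I).
Hypotheses (A_dom : is_domain A)
  (d_lin : forall i, klinear (d i)) (d_nil : forall i, locally_nilpotent (d i))
  (phi_lin : forall i, klinear (phi i)) (phi_inj : forall i, injective (phi i))
  (d_mul : forall i a b, d i (a * b) = d i a * b + phi i a * d i b)
  (d_phi : forall i x, d i (phi i x) = q i *: phi i (d i x))
  (q_nonroot : forall i k, (0 < k)%N -> q i ^+ k != 1)
  (d_phi_r : forall k l, r k l -> q_commute (d l) (phi k)).

Local Notation S js := (string_map [seq d i | i <- js]).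

Lemma string_map_scale js c x : c != 0 -> S js (c *: x) = S js x.
Proof.
move=> c0; elim: js x => [|i js IH] x //=.
have [->|x0] := eqVneq x 0; first by rewrite scaler0.
rewrite nuE_scale // (klinearZ (klinear_iter _ (d_lin i))) IH //.
Qed.

Lemma string_map_add js x y : x != 0 -> y != 0 -> x + y != 0 ->
  lexle (S js (x + y)) (S js x) || lexle (S js (x + y)) (S js y).
Proof.
elim: js x y => [|i js IH] x y x0 y0 xy0 //=.
have iterD k u v : iter k (d i) (u + v) = iter k (d i) u + iter k (d i) v.
  by apply: klinearD; apply: klinear_iter.
case: (ltngtP (nuE (d i) x) (nuE (d i) y)) => [lt_xy|lt_yx|eq_xy].
- have [-> ->] := nuE_add_lt (d_lin i) (d_nil i) x0 y0 lt_xy.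
  by rewrite /= ltnn eqxx lexle_refl !orbT.
- rewrite addrC in xy0 *.
  have [-> ->] := nuE_add_lt (d_lin i) (d_nil i) y0 x0 lt_yx.
  by rewrite /= ltnn eqxx lexle_refl !orbT.
have [Exy0|Exy] := eqVneq (iter (nuE (d i) x) (d i) (x + y)) 0.
  by rewrite /= (nuE_lt (d_lin i) (d_nil i) xy0 Exy0).
rewrite nuE_add_eq // -eq_xy /= ltnn eqxx /=.
by rewrite iterD; apply: IH; rewrite -?iterD ?iter_nuE_neq0 // eq_xy iter_nuE_neq0.
Qed.

Lemma nuE_mul_twisted i (Psi : A -> A) a b :
  klinear Psi -> injective Psi -> q_commute (d i) Psi -> a != 0 -> b != 0 ->
  exists2 kap : K, kap != 0 &
    nuE (d i) (Psi a * b) = (nuE (d i) a + nuE (d i) b)%N /\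
    iter (nuE (d i) a + nuE (d i) b) (d i) (Psi a * b)
      = kap *: (iter (nuE (d i) b) (phi i) (Psi (iter (nuE (d i) a) (d i) a))
                * iter (nuE (d i) b) (d i) b).
Proof.
move=> Psi_lin Psi_inj [c c0 dPsi] a0 b0.
set s := nuE (d i) a; set t := nuE (d i) b.
have [Dsa Ds1a] := nuE_spec (d_lin i) (d_nil i) a0.
have [Dtb Dt1b] := nuE_spec (d_lin i) (d_nil i) b0.
have iter_Psi k x : iter k (d i) (Psi x) = c ^+ k *: Psi (iter k (d i) x).
  exact: iter_q_commute.
have Ds1Psia : iter s.+1 (d i) (Psi a) = 0.
  by rewrite iter_Psi Ds1a klinear0 // scaler0.
set X := _ * iter t (d i) b.
have X0 : X != 0.
  rewrite domain_mul_neq0 //.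
  have phit_inj := iter_inj (n := t) (@phi_inj i).
  rewrite (klinear_inj_eq0 _ (klinear_iter t (phi_lin i)) phit_inj).
  by rewrite klinear_inj_eq0.
have qf0 k : qfact (q i) k != 0 := qfact_neq0 k (@q_nonroot i).
(* [kap] is the q-binomial [s+t choose s]_q, times [c ^+ s] from moving D past Psi. *)
set kap := (qfact (q i) s * qfact (q i) t)^-1 * (qfact (q i) (s + t) * c ^+ s).
have kap0 : kap != 0.
  by rewrite /kap !mulf_neq0 ?invr_neq0 ?mulf_neq0 ?expf_neq0.
have top : iter (s + t) (d i) (Psi a * b) = kap *: X.
  have st0 : qfact (q i) s * qfact (q i) t != 0 by rewrite mulf_neq0.
  rewrite -[LHS]scale1r -(mulVf st0) -scalerA.
  rewrite (iter_mul_top (d_lin i) (phi_lin i) (d_mul i) (d_phi i) _ Ds1Psia Dt1b) //.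
  rewrite iter_Psi (klinearZ (klinear_iter t (phi_lin i))) -scalerAl !scalerA.
  by rewrite /kap mulrA.
exists kap => //; split=> //; apply: (nuE_eq (d_lin i)).
  by rewrite top scaler_eq0 negb_or kap0 X0.
exact: (iter_mul_vanish (d_lin i) (phi_lin i) (d_mul i) (d_phi i) _ Ds1Psia Dt1b).
Qed.

Lemma string_map_mul_twisted js : pairwise r js ->
  forall (Psi : A -> A) a b, klinear Psi -> injective Psi ->
  {in js, forall l, q_commute (d l) Psi} -> a != 0 -> b != 0 ->
  S js (Psi a * b) = seq_addn (S js a) (S js b).
Proof.
elim: js => [|i js IH] //; rewrite pairwise_cons => /andP[r_i r_js].
move=> Psi a b Psi_lin Psi_inj dPsi a0 b0 /=.
have [kap kap0 [-> ->]] := nuE_mul_twisted Psi_lin Psi_inj (dPsi i (mem_head _ _)) a0 b0.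
rewrite string_map_scale // seq_addn_cons; congr (_ :: _).
have phit_lin := klinear_iter (nuE (d i) b) (phi_lin i).
apply: (IH r_js (iter (nuE (d i) b) (phi i) \o Psi)).
- exact: klinear_comp.
- exact/inj_comp/Psi_inj/iter_inj.
- move=> l l_js; apply: q_commute_comp => //; last exact/dPsi/mem_behead.
  exact/q_commute_iter/d_phi_r/(allP r_i).
- exact: iter_nuE_neq0.
- exact: iter_nuE_neq0.
Qed.

End StringMap.

Theorem mainTheorem12 (K : fieldType) (A : algType K) (m : nat)
    (phi d : 'I_m -> A -> A) (q : 'I_m -> 'I_m -> K) :
  is_domain A ->
  (forall k, alg_auto (phi k)) ->
  (forall k, skew_derivation (phi k) (d k)) ->
  (forall k, locally_nilpotent (d k)) ->
  (forall k l : 'I_m, (k <= l)%N -> q k l != 0) ->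
  (forall k l : 'I_m, (k <= l)%N -> forall x, d l (phi k x) = q k l *: phi k (d l x)) ->
  (forall k : 'I_m, forall n, (0 < n)%N -> q k k ^+ n != 1) ->
  let nu := string_map [seq d i | i <- enum 'I_m] in
  [/\ (forall (c : K) (x : A), c != 0 -> x != 0 -> nu (c *: x) = nu x),
      (forall x y : A, x != 0 -> y != 0 -> x + y != 0 ->
         lexle (nu (x + y)) (nu x) || lexle (nu (x + y)) (nu y))
    & (forall a b : A, a != 0 -> b != 0 -> nu (a * b) = seq_addn (nu a) (nu b))].
Proof.
move=> A_dom phi_auto d_skew d_nil q0 d_phi q_nonroot nu.
have d_lin k : klinear (d k) by case: (d_skew k).
have phi_lin k : klinear (phi k) by case: (phi_auto k).
have phi_inj k : injective (phi k) by case: (phi_auto k) => _ _ _ /bij_inj.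
have d_phi_le (k l : 'I_m) : (k <= l)%N -> q_commute (d l) (phi k).
  by move=> le_kl; exists (q k l); [apply: q0 | apply: d_phi].
have enum_le : pairwise (fun k l : 'I_m => (k <= l)%N) (enum 'I_m).
  rewrite -sorted_pairwise; last by move=> ? ? ?; apply: leq_trans.
  by have := iota_sorted 0 m; rewrite -val_enum_ord sorted_map.
have d_mul k : forall a b, d k (a * b) = d k a * b + phi k a * d k b.
  by case: (d_skew k).
split.
- by move=> c x c0 _; apply: string_map_scale.
- by move=> x y; apply: string_map_add.
- move=> a b a0 b0.
  have := string_map_mul_twisted (q := fun k => q k k) A_dom d_lin d_nil phi_lin
    phi_inj d_mul (fun k => d_phi k k (leqnn k)) q_nonroot d_phi_le
    enum_le (Psi := id); apply=> // l _; exact: q_commute_id.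
Qed.
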